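(* Let $n\ge1$, let $f:\{0,1\}^n\to\{0,1\}^n$, let $\check{M}$ be the adjacency matrix of its asynchronous iteration graph $\Gamma(f)$ (with respect to an enumeration of $\{0,1\}^n$), and let $M$ be the $2^n\times 2^n$ matrix with $M_{ij}=\frac{1}{n}\check{M}_{ij}$ for $i\neq j$ and $M_{ii}=1-\frac{1}{n}\sum_{j\neq i}\check{M}_{ij}$. If $\Gamma(f)$ is strongly connected, then the law of the output of the generator described below tends to the uniform distribution on $\{0,1\}^n$ if and only if $M$ is doubly stochastic (all its rows and all its columns sum to $1$).
   Context: With $F_f(i,x)=(x_1,\dots,x_{i-1},f_i(x),x_{i+1},\dots,x_n)$, $\Gamma(f)$ is the directed graph on $\{0,1\}^n$ with an arc from $x$ to $F_f(i,x)$ for every $x$ and $i\in\{1,\dots,n\}$; $\check{M}_{ij}=1$ if there is an arc from the $i$-th to the $j$-th configuration and $0$ otherwise. The generator (with parameters $f$, an integer $b$ and an initial configuration $x^0\in\{0,1\}^n$) does: set $x\leftarrow x^0$; draw $k\leftarrow b+r$ with $r$ uniformly distributed in $\{1,\dots,b+1\}$; then $k$ times, draw $s$ uniformly in $\{1,\dots,n\}$ and set $x\leftarrow F_f(s,x)$; output $x$. All random draws are provided by a uniform pseudo-random generator (XORshift), modeled as independent uniform draws, so that each step of the iteration is a Markov chain transition with matrix $M$. ''Tends to the uniform distribution'' refers to the law of the output as the number of iterations grows (i.e. as $b\to\infty$). *)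

From HB Require Import structures.
From mathcomp Require Import all_boot all_order all_algebra.
From mathcomp Require Import all_classical all_reals all_analysis.
Set Implicit Arguments. Unset Strict Implicit. Unset Printing Implicit Defensive.
Import Order.TTheory GRing.Theory Num.Theory.
Local Open Scope ring_scope.

Definition config (n : nat) := {ffun 'I_n -> bool}.

Definition Ff (n : nat) (f : config n -> config n) (i : 'I_n) (x : config n)
  : config n := [ffun j => if j == i then f x i else x j].

Definition arc (n : nat) (f : config n -> config n) : rel (config n) :=
  fun x y => [exists i : 'I_n, Ff f i x == y].

Definition strongly_connected (n : nat) (f : config n -> config n) : Prop :=
  forall x y : config n, connect (arc f) x y.

Definition N (n : nat) : nat := #|config n|.
Definition cfg (n : nat) (i : 'I_(N n)) : config n := enum_val i.

Definition Mcheck (R : nzRingType) (n : nat) (f : config n -> config n)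
  : 'M[R]_(N n) :=
  \matrix_(i, j) (arc f (cfg i) (cfg j))%:R.

Definition Mmat (R : fieldType) (n : nat) (f : config n -> config n)
  : 'M[R]_(N n) :=
  \matrix_(i, j)
    (if i == j then 1 - n%:R^-1 * \sum_(k | k != i) Mcheck R f i k
     else n%:R^-1 * Mcheck R f i j).

Definition doubly_stochastic (R : numDomainType) (m : nat) (A : 'M[R]_m)
  : Prop :=
  (forall i j, 0 <= A i j) /\
  (forall i, \sum_j A i j = 1) /\
  (forall j, \sum_i A i j = 1).

(* Law of x after k iterations of "draw s uniformly in {1..n}, x <- F_f(s,x)",
   starting from x0 (independent uniform draws). *)
Fixpoint iter_law (R : fieldType) (n : nat) (f : config n -> config n)
  (k : nat) (x0 : config n) (y : config n) : R :=
  match k with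
  | 0 => (x0 == y)%:R
  | k.+1 => \sum_(x : config n)
              iter_law R f k x0 x * (n%:R^-1 * #|[set s : 'I_n | Ff f s x == y]|%:R)
  end.

(* Law of the generator's output with parameters f, b, x0:
   k = b + r with r uniform in {1,...,b+1}. *)
Definition gen_law (R : fieldType) (n : nat) (f : config n -> config n)
  (b : nat) (x0 y : config n) : R :=
  (b.+1%:R)^-1 * \sum_(r < b.+1) iter_law R f (b + r.+1) x0 y.

From Pilot Require Import Defs.
From HB Require Import structures.
From mathcomp Require Import all_boot all_order all_algebra.
From mathcomp Require Import all_classical all_reals all_analysis.
From mathcomp Require Import lra.
Import Order.TTheory GRing.Theory Num.Theory.
Import numFieldNormedType.Exports.
Local Open Scope classical_set_scope.
Local Open Scope ring_scope.

(* The generator's output law [w_b] averages the laws after b+1, ..., 2b+1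
   steps of the chain with kernel [M], so one more step changes it by
   O(1/b): [w_b M - w_b] tends to 0.  Under strong connectivity, a vector
   [v] with [v M = v] and total mass 0 vanishes when the columns of [M] sum
   to 1 (maximum principle), so [v |-> (v M - v, mass v)] is injective,
   hence has a continuous left inverse, and [w_b] converges to the unique
   invariant law, the uniform one.  Conversely, a limit of [w_b] is
   [M]-invariant, and the uniform law is invariant exactly when the
   columns of [M] sum to 1. *)

Lemma cvg_sum (R : realType) (I : finType) (u : nat -> I -> R) (l : I -> R) :
  (forall i, (fun b => u b i) @ \oo --> l i) ->
  (fun b => \sum_i u b i) @ \oo --> \sum_i l i.
Proof. by move=> cvg_u; apply: cvg_big => //; exact: add_continuous. Qed.

Lemma sum_enum_val (V : nmodType) (T : finType) (F : T -> V) :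
  \sum_(i < #|T|) F (enum_val i) = \sum_x F x.
Proof. by rewrite (big_enum_val (A := predT) F). Qed.

Lemma sum_uniform (R : numFieldType) (T : finType) :
  (0 < #|T|)%N -> \sum_(x : T) (#|T|%:R : R)^-1 = 1.
Proof.
move=> T_gt0; rewrite sumr_const -[_ *+ #|xpredT|]mulr_natr mulVf //.
by rewrite pnatr_eq0 -lt0n; exact: T_gt0.
Qed.

Lemma cvg_harmonic_scaled (R : realType) (d : nat -> R) :
  (forall b, -1 <= d b <= 1) -> (fun b => b.+1%:R^-1 * d b) @ \oo --> 0.
Proof.
move=> d_bound; apply: (@squeeze_cvgr _ _ _ _ (-%R \o harmonic) harmonic).
- apply: filterE => b; rewrite -ler_norml normrM ger0_norm ?invr_ge0 //.
  by rewrite ler_piMr ?invr_ge0 // ler_norml.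
- by rewrite -oppr0; apply: cvgN; exact: cvg_harmonic.
- exact: cvg_harmonic.
Qed.

Section FiniteMarkovChain.
Context {R : realType} {T : finType} (P : T -> T -> R).

Definition step (mu : T -> R) (y : T) : R := \sum_x mu x * P x y.

Hypothesis P_ge0 : forall x y, 0 <= P x y.

Lemma step_ge0 mu y : (forall x, 0 <= mu x) -> 0 <= step mu y.
Proof. by move=> mu_ge0; apply: sumr_ge0 => x _; rewrite mulr_ge0. Qed.

Hypothesis P_row : forall x, \sum_y P x y = 1.

Lemma sum_step mu : \sum_y step mu y = \sum_x mu x.
Proof.
rewrite exchange_big; apply: eq_bigr => x _.
by rewrite -mulr_sumr P_row mulr1.
Qed.

Lemma step_cvg_fixed {mu : nat -> T -> R} {nu : T -> R} :
  (forall x, (fun b => mu b x) @ \oo --> nu x) ->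
  (forall y, (fun b => step (mu b) y - mu b y) @ \oo --> 0) ->
  forall y, step nu y = nu y.
Proof.
move=> mu_nu step_mu y; apply/eqP; rewrite -subr_eq0; apply/eqP.
apply/esym; apply: (cvg_unique (@norm_hausdorff _ R^o) (step_mu y)).
apply: cvgB; last exact: mu_nu.
by apply: cvg_sum => x; exact: cvgMr_tmp.
Qed.

Lemma step_uniform y :
  step (fun=> #|T|%:R^-1) y = #|T|%:R^-1 * \sum_x P x y.
Proof. by rewrite /step -mulr_sumr. Qed.

Hypothesis P_col : forall y, \sum_x P x y = 1.
Hypothesis P_irreducible : forall x y, connect [rel x y | P x y != 0] x y.

(* Maximum principle: the set where an invariant [g] attains its maximum is
   closed under predecessors, and by irreducibility every point reaches it. *)
Lemma invariant_const (g : T -> R) : (forall y, step g y = g y) ->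
  forall x y, g x = g y.
Proof.
move=> g_inv x0; have [z _ g_max] := @arg_maxP _ _ T x0 xpredT g isT.
have pred_max y x : g y = g z -> P x y != 0 -> g x = g z.
  move=> gyz Pxy0.
  have defect0 : \sum_x' P x' y * (g z - g x') = 0.
    under eq_bigr do rewrite mulrBr.
    rewrite sumrB -mulr_suml P_col mul1r.
    under eq_bigr do rewrite mulrC.
    have := g_inv y; rewrite /step => ->.
    by rewrite gyz subrr.
  have term_ge0 x' : true -> 0 <= P x' y * (g z - g x').
    by move=> _; rewrite mulr_ge0 // subr_ge0; exact: g_max.
  have /eqP := psumr_eq0P term_ge0 defect0 (i := x) isT.
  by rewrite mulf_eq0 (negbTE Pxy0) subr_eq0 => /eqP.
suff to_max x : g x = g z by move=> y; rewrite !to_max.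
have /connectP[p p_path z_last] := P_irreducible x z.
elim: p x p_path z_last => [|y p IHp] x /= => [_ -> //|/andP[Pxy p_path] z_last].
exact: pred_max (IHp _ p_path z_last) Pxy.
Qed.

Definition vec (mu : T -> R) : 'rV[R]_(#|T|) := \row_i mu (enum_val i).

Lemma vec_rank mu x : vec mu 0 (enum_rank x) = mu x.
Proof. by rewrite mxE enum_rankK. Qed.

Lemma vecE (v : 'rV[R]_(#|T|)) : v = vec (fun x => v 0 (enum_rank x)).
Proof. by apply/rowP => i; rewrite mxE enum_valK. Qed.

Definition trans_mx : 'M[R]_(#|T|) := \matrix_(i, j) P (enum_val i) (enum_val j).

(* [v *m stationarity_mx] records the defect [v P - v] of [v] and its mass. *)
Definition stationarity_mx : 'M[R]_(#|T|, #|T| + 1) :=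
  row_mx (trans_mx - 1%:M) (const_mx 1).

Lemma vec_stationarity_lshift mu y :
  (vec mu *m stationarity_mx) 0 (lshift 1 (enum_rank y)) = step mu y - mu y.
Proof.
rewrite mul_mx_row row_mxEl mulmxBr mulmx1 !mxE enum_rankK; congr (_ - _).
rewrite /step -[in RHS]sum_enum_val; apply: eq_bigr => i _.
by rewrite !mxE enum_rankK.
Qed.

Lemma vec_stationarity_rshift mu k :
  (vec mu *m stationarity_mx) 0 (rshift #|T| k) = \sum_x mu x.
Proof.
rewrite mul_mx_row row_mxEr mxE -[in RHS]sum_enum_val; apply: eq_bigr => i _.
by rewrite !mxE mulr1.
Qed.

Lemma row_free_stationarity_mx : row_free stationarity_mx.
Proof.
apply: inj_row_free => v; rewrite [v]vecE; set g := fun x => _ => gA0.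
have g_inv y : step g y = g y.
  by apply/eqP; rewrite -subr_eq0 -vec_stationarity_lshift gA0 mxE.
have g_mass : \sum_x g x = 0 by rewrite -(vec_stationarity_rshift g 0) gA0 mxE.
apply/rowP => i; rewrite !mxE.
have T_gt0 : (0 < #|T|)%N := leq_ltn_trans (leq0n i) (ltn_ord i).
move: g_mass; under eq_bigr => x _ do rewrite -(invariant_const _ g_inv (enum_val i) x).
by rewrite sumr_const => /eqP; rewrite mulrn_eq0 eqn0Ngt T_gt0 => /eqP.
Qed.

(* Injectivity of [v |-> v *m stationarity_mx] gives a linear left inverse
   [B]; since [mu b *m stationarity_mx] converges to [u *m stationarity_mx]
   for the uniform law [u], so does [mu b = mu b *m stationarity_mx *m B]. *)
Lemma cvg_uniform {mu : nat -> T -> R} :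
  (forall b, \sum_x mu b x = 1) ->
  (forall y, (fun b => step (mu b) y - mu b y) @ \oo --> 0) ->
  forall y, (fun b => mu b y) @ \oo --> (#|T|%:R : R)^-1.
Proof.
move=> mu_mass mu_step y.
have [B AB] := row_freeP row_free_stationarity_mx.
have expand nu :
    nu y = \sum_l (vec nu *m stationarity_mx) 0 l * B l (enum_rank y).
  by rewrite -[LHS]vec_rank -{1}(mulmx1 (vec nu)) -AB mulmxA mxE.
pose u : T -> R := fun=> #|T|%:R^-1.
rewrite [X in _ --> X](_ : _ = u y) // (expand u).
under eq_cvg => b do rewrite (expand (mu b)).
apply: cvg_sum => l; apply: cvgMr_tmp.
rewrite -(fintype.splitK l); case: (fintype.split l) => [j|k] /=.
- rewrite -(enum_valK j) vec_stationarity_lshift step_uniform P_col mulr1 subrr.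
  by under eq_cvg do rewrite vec_stationarity_lshift; exact: mu_step.
- have T_gt0 : (0 < #|T|)%N by apply/card_gt0P; exists y.
  rewrite vec_stationarity_rshift sum_uniform //.
  by under eq_cvg do rewrite vec_stationarity_rshift mu_mass; exact: cvg_cst.
Qed.

End FiniteMarkovChain.

Section AsynchronousGenerator.
Context {R : realType} {n : nat} (f : config n -> config n).

Definition trans_prob (x y : config n) : R :=
  n%:R^-1 * #|[set s : 'I_n | Ff f s x == y]%SET|%:R.

Lemma sum_cfg (F : config n -> R) : \sum_(i < Defs.N n) F (cfg i) = \sum_x F x.
Proof. exact: sum_enum_val. Qed.

Lemma trans_prob_ge0 x y : 0 <= trans_prob x y.
Proof. by rewrite mulr_ge0 // invr_ge0. Qed.

Lemma iter_lawS k x0 y :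
  iter_law R f k.+1 x0 y = step trans_prob (iter_law R f k x0) y.
Proof. by []. Qed.

Lemma sum_card_Ff x : (\sum_y #|[set s : 'I_n | Ff f s x == y]%SET| = n)%N.
Proof.
under eq_bigr do rewrite -sum1_card big_mkcond /=.
rewrite exchange_big /= -[n in RHS]card_ord -sum1_card.
apply: eq_bigr => s _; rewrite (bigD1 (Ff f s x)) //= inE eqxx big1 ?addn0 //.
by move=> y; rewrite inE eq_sym => /negbTE ->.
Qed.

Lemma Ff_index_unique x y s t :
  x != y -> Ff f s x = y -> Ff f t x = y -> s = t.
Proof.
move=> xy; have /existsP[j xyj] : [exists j, x j != y j].
  by apply: contraR xy => /existsPn xy_eq; apply/eqP/ffunP => j; apply/eqP/negPn.
have index_j u : Ff f u x = y -> j = u.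
  move=> Fuxy; move: xyj; rewrite -Fuxy /Ff ffunE.
  by case: (j =P u) => // _; rewrite eqxx.
by move=> /index_j <- /index_j.
Qed.

Lemma trans_prob_neq x y : x != y -> trans_prob x y = n%:R^-1 * (Defs.arc f x y)%:R.
Proof.
move=> xy; rewrite /trans_prob /Defs.arc; congr (_ * _%:R).
case: existsP => [[s /eqP Fsxy]|no_arc].
  rewrite (_ : [set _ | _]%SET = [set s]%SET) ?cards1 //; apply/setP => t.
  by rewrite !inE; apply/eqP/eqP => [Ftxy|->//]; exact: Ff_index_unique Ftxy Fsxy.
apply/eqP; rewrite cards_eq0; apply/eqP/setP => t; rewrite !inE.
by apply/negP => Ftxy; apply: no_arc; exists t.
Qed.

Hypothesis n_gt0 : (0 < n)%N.

Lemma trans_prob_row x : \sum_y trans_prob x y = 1.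
Proof.
by rewrite -mulr_sumr -natr_sum sum_card_Ff mulVf // pnatr_eq0 -lt0n.
Qed.

Lemma Mmat_trans_prob i j : Mmat R f i j = trans_prob (cfg i) (cfg j).
Proof.
have cfg_neq k : k != i -> cfg i != cfg k.
  by apply: contraNneq => /enum_val_inj ->.
rewrite mxE; case: eqVneq => [<-|ij]; last first.
  by rewrite trans_prob_neq ?cfg_neq 1?eq_sym // mxE.
have := trans_prob_row (cfg i); rewrite -sum_cfg (bigD1 i) //= => row_i.
rewrite -[X in X - _]row_i (_ : n%:R^-1 * _ =
  \sum_(k | k != i) trans_prob (cfg i) (cfg k)) ?addrK // mulr_sumr.
apply: eq_bigr => k ki.
by rewrite trans_prob_neq ?cfg_neq // mxE.
Qed.

Lemma trans_prob_irreducible : strongly_connected f ->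
  forall x y, connect [rel x y | trans_prob x y != 0] x y.
Proof.
move=> f_sc x y; apply: connect_sub (f_sc x y) => {}x {}y xy_arc.
have [<-|xy] := eqVneq x y; first exact: connect0.
by apply: connect1; rewrite /= trans_prob_neq // xy_arc mulr1 invr_eq0 pnatr_eq0 -lt0n.
Qed.

Lemma doubly_stochastic_Mmat :
  doubly_stochastic (Mmat R f) <-> forall y, \sum_x trans_prob x y = 1.
Proof.
split=> [[_ [_ col]] y | col].
  rewrite -sum_cfg -(col (enum_rank y)); apply: eq_bigr => i _.
  by rewrite Mmat_trans_prob /cfg enum_rankK.
split=> [i j|]; first by rewrite Mmat_trans_prob trans_prob_ge0.
split=> [i|j]; under eq_bigr do rewrite Mmat_trans_prob.
  by rewrite (sum_cfg (trans_prob (cfg i))) trans_prob_row.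
by rewrite (sum_cfg (trans_prob^~ (cfg j))) col.
Qed.

Lemma iter_law_ge0 k x0 y : 0 <= iter_law R f k x0 y.
Proof.
elim: k y => [|k IHk] y; first exact: ler0n.
by rewrite (iter_lawS k x0 y); apply: step_ge0 => //; exact: trans_prob_ge0.
Qed.

Lemma iter_law_mass k x0 : \sum_y iter_law R f k x0 y = 1.
Proof.
elim: k => [|k IHk].
  rewrite (bigD1 x0) //= eqxx big1 ?addr0 // => y.
  by rewrite eq_sym => /negbTE ->.
under eq_bigr => y _ do rewrite (iter_lawS k x0 y).
by rewrite sum_step //; exact: trans_prob_row.
Qed.

Lemma iter_law_le1 k x0 y : iter_law R f k x0 y <= 1.
Proof.
rewrite -(iter_law_mass k x0) (bigD1 y) //= lerDl.
by apply: sumr_ge0 => x _; exact: iter_law_ge0.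
Qed.

Lemma gen_law_mass x0 b : \sum_y gen_law R f b x0 y = 1.
Proof.
rewrite /gen_law -mulr_sumr exchange_big /=.
under eq_bigr do rewrite iter_law_mass.
by rewrite sumr_const card_ord mulVf // pnatr_eq0.
Qed.

(* One more step shifts the averaging window [b+1, 2b+1] by one: all but the
   two extreme terms cancel. *)
Lemma gen_law_step b x0 y :
  step trans_prob (gen_law R f b x0) y - gen_law R f b x0 y =
  b.+1%:R^-1 * (iter_law R f (b + b.+1).+1 x0 y - iter_law R f b.+1 x0 y).
Proof.
have -> : step trans_prob (gen_law R f b x0) y =
    b.+1%:R^-1 * \sum_(r < b.+1) iter_law R f (b + r.+1).+1 x0 y.
  rewrite /step; under eq_bigr do rewrite /gen_law -mulrA.
  rewrite -mulr_sumr; congr (_ * _); under eq_bigr do rewrite mulr_suml.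
  by rewrite exchange_big.
rewrite /gen_law -mulrBr -sumrB; congr (_ * _).
pose u k := iter_law R f (b + k.+1) x0 y.
rewrite (eq_bigr (fun r : 'I_b.+1 => u r.+1 - u r)); last first.
  by move=> r _; rewrite /u !addnS.
by rewrite -(big_mkord xpredT (fun r => u r.+1 - u r)) telescope_sumr // /u addn1 addnS.
Qed.

Lemma gen_law_step_cvg0 x0 y :
  (fun b => step trans_prob (gen_law R f b x0) y - gen_law R f b x0 y) @ \oo --> 0.
Proof.
under eq_cvg do rewrite gen_law_step.
apply: cvg_harmonic_scaled => b.
have := iter_law_ge0 (b + b.+1).+1 x0 y; have := iter_law_le1 (b + b.+1).+1 x0 y.
have := iter_law_ge0 b.+1 x0 y; have := iter_law_le1 b.+1 x0 y.
by move=> *; apply/andP; split; lra.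
Qed.

End AsynchronousGenerator.

Theorem theorem4 (R : realType) (n : nat) (f : config n -> config n) :
  (0 < n)%N ->
  strongly_connected f ->
  ((forall x0 y : config n,
      (fun b : nat => gen_law R f b x0 y) @ \oo --> (#|config n|%:R : R)^-1)
   <-> doubly_stochastic (Mmat R f)).
Proof.
move=> n_gt0 f_sc; rewrite doubly_stochastic_Mmat //.
split=> [gen_uniform y | col x0].
- have := step_cvg_fixed _ (gen_uniform y) (gen_law_step_cvg0 f n_gt0 y) y.
  have c_neq0 : (#|config n|%:R : R)^-1 != 0.
    by rewrite invr_eq0 pnatr_eq0 -lt0n; apply/card_gt0P; exists y.
  by rewrite step_uniform -{2}[_^-1]mulr1 => /(mulfI c_neq0).
- exact (cvg_uniform _ (trans_prob_ge0 f) col (trans_prob_irreducible f n_gt0 f_sc)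
    (gen_law_mass f n_gt0 x0) (gen_law_step_cvg0 f n_gt0 x0)).
Qed.
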